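(* Let $r>0$, $\sigma\ge0$, $\kappa>0$, $\tau>0$, $p\in[0,1]$ with $\varepsilon=pe^{-\tau}<1$, and $q_c=1-\frac{1}{r}\frac{1}{1-\varepsilon}$. Let $\eta,q\in\mathbb{R}$, $u(\eta,q)=(1-\eta-q,\eta,0,q)$, and let $\mathcal{F}^*_{\eta,q}=\{\phi\in\mathcal{C}^*: H^*(\phi)=H^*(\widehat{u(\eta,q)})\}$ be the level set of $H^*=(H_1^*,H_2^* )$ containing $\widehat{u(\eta,q)}$. Then: (1) $\mathcal{F}^*_{\eta,q}\cap\mathcal{E}^*_0=\{\widehat{u(\eta,q)}\}$. (2) $\mathcal{F}^*_{\eta,q}\cap\mathcal{E}^*_I=\{\widehat{v(\eta,q)}\}$, where $v(\eta,q)=(v_S,v_E(\eta,q),v_I(\eta,q),v_Q(\eta,q))$ with $v_S=\frac{1}{r(1-\varepsilon)}$ and \[ v_E(\eta,q)=\frac{\sigma}{1-\varepsilon+\sigma+\varepsilon\kappa}(q_c-q-\eta)+\eta,\qquad v_I(\eta,q)=\frac{1-\varepsilon}{1-\varepsilon+\sigma+\varepsilon\kappa}(q_c-q-\eta), \] \[ v_Q(\eta,q)=\frac{\varepsilon\kappa}{1-\varepsilon+\sigma+\varepsilon\kappa}(q_c-q-\eta)+q. \]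
   Context: The SEIQ system is \[ \dot S(t)=-rS(t)I(t)+I(t)+r\varepsilon S(t-\sigma-\tau-\kappa)I(t-\sigma-\tau-\kappa),\qquad \dot E(t)=rS(t)I(t)-rS(t-\sigma)I(t-\sigma), \] \[ \dot I(t)=rS(t-\sigma)I(t-\sigma)-I(t)-r\varepsilon S(t-\sigma-\tau)I(t-\sigma-\tau), \] \[ \dot Q(t)=r\varepsilon\big[S(t-\sigma-\tau)I(t-\sigma-\tau)-S(t-\sigma-\tau-\kappa)I(t-\sigma-\tau-\kappa)\big], \] on $\mathcal{C}^*=\{\phi\in C([-\sigma-\tau-\kappa,0],\mathbb{R}^4):\phi_S+\phi_E+\phi_I+\phi_Q\equiv1\}$. For $u\in\mathbb{R}^4$, $\hat u$ is the constant function with value $u$. $\mathcal{E}^*_0=\{\hat\phi\in\mathcal{C}^*\text{ constant}:\phi_I=0\}$ and $\mathcal{E}^*_I=\{\hat\phi\in\mathcal{C}^*\text{ constant}:\phi_S=\frac{1}{r(1-\varepsilon)}\}$. The functionals are $H_1^*(\phi)=1-\phi_S(0)-\phi_E(0)-\phi_I(-\kappa)+\int_{-\kappa}^{0}\phi_I(s)ds-r\int_{-\sigma-\kappa}^{-\sigma}\phi_S(s)\phi_I(s)ds$ and $H_2^*(\phi)=\phi_E(0)-r\int_{-\sigma}^{0}\phi_S(s)\phi_I(s)ds$. *)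

From Stdlib Require Import Reals.
From Coquelicot Require Import Coquelicot.
Open Scope R_scope.

(* An element phi of C([-sigma-tau-kappa,0], R^4), given by its four
   components (only their values on the interval matter). *)
Record fn4 := Fn4 { pS : R -> R; pE : R -> R; pI : R -> R; pQ : R -> R }.

Record vec4 := Vec4 { vS : R; vE : R; vI : R; vQ : R }.

Definition hist (sigma tau kappa : R) (s : R) : Prop :=
  - sigma - tau - kappa <= s <= 0.

Definition inCstar (sigma tau kappa : R) (phi : fn4) : Prop :=
  let D := hist sigma tau kappa in
  continuous_on D (pS phi) /\ continuous_on D (pE phi) /\
  continuous_on D (pI phi) /\ continuous_on D (pQ phi) /\
  forall s, D s -> pS phi s + pE phi s + pI phi s + pQ phi s = 1.

Definition eqC (sigma tau kappa : R) (phi psi : fn4) : Prop :=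
  forall s, hist sigma tau kappa s ->
    pS phi s = pS psi s /\ pE phi s = pE psi s /\
    pI phi s = pI psi s /\ pQ phi s = pQ psi s.

Definition hat (u : vec4) : fn4 :=
  Fn4 (fun _ => vS u) (fun _ => vE u) (fun _ => vI u) (fun _ => vQ u).

Definition is_const (sigma tau kappa : R) (phi : fn4) (c : vec4) : Prop :=
  eqC sigma tau kappa phi (hat c).

Definition inE0 (sigma tau kappa : R) (phi : fn4) : Prop :=
  inCstar sigma tau kappa phi /\
  exists c, is_const sigma tau kappa phi c /\ vI c = 0.

Definition inEI (r eps sigma tau kappa : R) (phi : fn4) : Prop :=
  inCstar sigma tau kappa phi /\
  exists c, is_const sigma tau kappa phi c /\ vS c = 1 / (r * (1 - eps)).

Definition H1 (r sigma kappa : R) (phi : fn4) : R :=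
  1 - pS phi 0 - pE phi 0 - pI phi (- kappa)
  + RInt (pI phi) (- kappa) 0
  - r * RInt (fun s => pS phi s * pI phi s) (- sigma - kappa) (- sigma).

Definition H2 (r sigma : R) (phi : fn4) : R :=
  pE phi 0 - r * RInt (fun s => pS phi s * pI phi s) (- sigma) 0.

Definition u_eq (eta q : R) : vec4 := Vec4 (1 - eta - q) eta 0 q.

Definition inF (r sigma tau kappa eta q : R) (phi : fn4) : Prop :=
  inCstar sigma tau kappa phi /\
  H1 r sigma kappa phi = H1 r sigma kappa (hat (u_eq eta q)) /\
  H2 r sigma phi = H2 r sigma (hat (u_eq eta q)).

Definition v_eq (r eps sigma kappa eta q : R) : vec4 :=
  let qc := 1 - (1 / r) * (1 / (1 - eps)) in
  let D := 1 - eps + sigma + eps * kappa in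
  Vec4 (1 / (r * (1 - eps)))
       (sigma / D * (qc - q - eta) + eta)
       ((1 - eps) / D * (qc - q - eta))
       (eps * kappa / D * (qc - q - eta) + q).

(** On a constant state [hat c] the integrals in [H1] and [H2] are explicit,
    so the level-set conditions become two linear equations in the entries of
    [c]; together with [S + E + I + Q = 1] and the defining equation of
    [E0] (namely [I = 0]) or of [EI] (namely [S = 1/(r(1-eps))]) they form a
    nonsingular linear system whose unique solution is [u(eta,q)], resp.
    [v(eta,q)]. Since [H1] and [H2] only read [phi] on the history interval,
    a state in one of the two equilibrium sets lies in the level set iff its
    constant value does. *)

From Pilot Require Import Defs.
From Stdlib Require Import Reals Lra.
From Coquelicot Require Import Coquelicot.
Open Scope R_scope.

Definition vsum (c : vec4) : R := vS c + vE c + vI c + vQ c.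

Lemma vec4_ext (c d : vec4) :
  vS c = vS d -> vE c = vE d -> vI c = vI d -> vQ c = vQ d -> c = d.
Proof. destruct c, d; simpl; intros -> -> -> ->; reflexivity. Qed.

Lemma continuous_on_const (D : R -> Prop) (a : R) : continuous_on D (fun _ => a).
Proof. apply continuous_on_forall; intros x _; apply continuous_const. Qed.

Lemma inCstar_hat (sigma tau kappa : R) (c : vec4) :
  vsum c = 1 -> inCstar sigma tau kappa (hat c).
Proof.
  intros hc; repeat split; simpl; try apply continuous_on_const.
  intros s _; exact hc.
Qed.

Lemma RInt_ext_le (f g : R -> R) (a b : R) :
  a <= b -> (forall x, a <= x <= b -> f x = g x) -> RInt f a b = RInt g a b.
Proof.
  intros hab hfg; apply RInt_ext; intros x.
  rewrite Rmin_left, Rmax_right by exact hab; intros hx; apply hfg; lra.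
Qed.

Lemma H1_hat (r sigma kappa : R) (c : vec4) :
  vsum c = 1 -> H1 r sigma kappa (hat c) = vQ c + kappa * vI c * (1 - r * vS c).
Proof.
  unfold vsum, H1; simpl; intros hc; rewrite !RInt_const; unfold scal; simpl.
  unfold mult; simpl; lra.
Qed.

Lemma H2_hat (r sigma : R) (c : vec4) :
  H2 r sigma (hat c) = vE c - sigma * vI c * (r * vS c).
Proof.
  unfold H2; simpl; rewrite RInt_const; unfold scal; simpl.
  unfold mult; simpl; ring.
Qed.

Lemma u_eq_equilibrium (r sigma kappa eta q : R) :
  let u := u_eq eta q in
  vsum u = 1 /\ H1 r sigma kappa (hat u) = q /\ H2 r sigma (hat u) = eta.
Proof.
  intros u.
  assert (hu : vsum u = 1) by (unfold vsum; simpl; ring).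
  rewrite H1_hat, H2_hat by exact hu; simpl; repeat split; [exact hu | ring ..].
Qed.

Section LevelSet.

Variables (r sigma tau kappa eta q : R).
Hypotheses (hsigma : 0 <= sigma) (htau : 0 <= tau) (hkappa : 0 <= kappa).

Let hist_sub (a b : R) :
  - sigma - tau - kappa <= a -> b <= 0 ->
  forall x, a <= x <= b -> hist sigma tau kappa x.
Proof. intros ha hb x hx; unfold hist; lra. Qed.

Lemma H1_eqC (phi psi : fn4) :
  eqC sigma tau kappa phi psi -> H1 r sigma kappa phi = H1 r sigma kappa psi.
Proof.
  intros he; unfold H1.
  destruct (he 0) as [hS0 [hE0 _]]; [unfold hist; lra |].
  destruct (he (- kappa)) as [_ [_ [hIk _]]]; [unfold hist; lra |].
  rewrite hS0, hE0, hIk.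
  assert (hI : RInt (pI phi) (- kappa) 0 = RInt (pI psi) (- kappa) 0).
  { apply RInt_ext_le; [lra |].
    intros x hx; destruct (he x) as [_ [_ [-> _]]]; [|reflexivity].
    apply (hist_sub (- kappa) 0); lra. }
  assert (hSI : RInt (fun s => pS phi s * pI phi s) (- sigma - kappa) (- sigma)
              = RInt (fun s => pS psi s * pI psi s) (- sigma - kappa) (- sigma)).
  { apply RInt_ext_le; [lra |].
    intros x hx; destruct (he x) as [-> [_ [-> _]]]; [|reflexivity].
    apply (hist_sub (- sigma - kappa) (- sigma)); lra. }
  rewrite hI, hSI; reflexivity.
Qed.

Lemma H2_eqC (phi psi : fn4) :
  eqC sigma tau kappa phi psi -> H2 r sigma phi = H2 r sigma psi.
Proof.
  intros he; unfold H2.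
  destruct (he 0) as [_ [-> _]]; [unfold hist; lra |].
  f_equal; f_equal; apply RInt_ext_le; [lra |].
  intros x hx; destruct (he x) as [-> [_ [-> _]]]; [|reflexivity].
  apply (hist_sub (- sigma) 0); lra.
Qed.

Lemma vsum_is_const (phi : fn4) (c : vec4) :
  inCstar sigma tau kappa phi -> Defs.is_const sigma tau kappa phi c -> vsum c = 1.
Proof.
  intros hphi hc; destruct hphi as [_ [_ [_ [_ hsum]]]].
  assert (h0 : hist sigma tau kappa 0) by (unfold hist; lra).
  destruct (hc 0 h0) as [hS [hE [hI hQ]]]; simpl in *.
  unfold vsum; rewrite <- hS, <- hE, <- hI, <- hQ; exact (hsum 0 h0).
Qed.

Lemma level_set_meet_constants (P : vec4 -> Prop) (w : vec4) :
  vsum w = 1 -> P w ->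
  H1 r sigma kappa (hat w) = q -> H2 r sigma (hat w) = eta ->
  (forall c, vsum c = 1 -> P c ->
     H1 r sigma kappa (hat c) = q -> H2 r sigma (hat c) = eta -> c = w) ->
  inCstar sigma tau kappa (hat w) /\
  forall phi,
    (inF r sigma tau kappa eta q phi /\
     (inCstar sigma tau kappa phi /\
      exists c, Defs.is_const sigma tau kappa phi c /\ P c)) <->
    (inCstar sigma tau kappa phi /\ eqC sigma tau kappa phi (hat w)).
Proof.
  intros hw hPw hw1 hw2 huniq; split; [now apply inCstar_hat |].
  destruct (u_eq_equilibrium r sigma kappa eta q) as [_ [hu1 hu2]].
  intros phi; unfold inF; rewrite hu1, hu2; split.
  - intros [[hphi [h1 h2]] [_ [c [hc hPc]]]]; split; [exact hphi |].
    rewrite (H1_eqC _ _ hc) in h1; rewrite (H2_eqC _ _ hc) in h2.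
    rewrite <- (huniq c (vsum_is_const _ _ hphi hc) hPc h1 h2); exact hc.
  - intros [hphi hc].
    rewrite (H1_eqC _ _ hc), (H2_eqC _ _ hc).
    split; [now split | split; [exact hphi | now exists w]].
Qed.

End LevelSet.

Section Equilibria.

Variables (r sigma kappa eps eta q : R).

Lemma const_I0_unique (c : vec4) :
  vsum c = 1 -> vI c = 0 ->
  H1 r sigma kappa (hat c) = q -> H2 r sigma (hat c) = eta -> c = u_eq eta q.
Proof.
  intros hc hI; rewrite H1_hat, H2_hat, hI by exact hc; intros h1 h2.
  unfold vsum in hc; apply vec4_ext; simpl; lra.
Qed.

Hypotheses (hr : r <> 0) (heps : 1 - eps <> 0)
  (hD : 1 - eps + sigma + eps * kappa <> 0).

Let hrS (c : vec4) : vS c = 1 / (r * (1 - eps)) -> r * vS c = 1 / (1 - eps).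
Proof. intros ->; field; split; assumption. Qed.

Lemma v_eq_equilibrium :
  let v := v_eq r eps sigma kappa eta q in
  vsum v = 1 /\ H1 r sigma kappa (hat v) = q /\ H2 r sigma (hat v) = eta.
Proof.
  intros v.
  assert (hv : vsum v = 1) by (unfold v, vsum; simpl; field; auto).
  rewrite H1_hat, H2_hat, hrS by (reflexivity || exact hv).
  unfold v; simpl; repeat split; [exact hv | field; auto ..].
Qed.

(* With [x := I / (1 - eps)] the two level equations read [Q = q + eps kappa x]
   and [E = eta + sigma x]; the constraint [S + E + I + Q = 1] then fixes [x]. *)
Lemma const_S_unique (c : vec4) :
  vsum c = 1 -> vS c = 1 / (r * (1 - eps)) ->
  H1 r sigma kappa (hat c) = q -> H2 r sigma (hat c) = eta ->
  c = v_eq r eps sigma kappa eta q.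
Proof.
  intros hc hS; rewrite H1_hat, H2_hat, hrS by assumption; intros h1 h2.
  set (x := vI c / (1 - eps)).
  assert (hI : vI c = (1 - eps) * x) by (unfold x; field; exact heps).
  assert (hQ : vQ c = q + eps * kappa * x).
  { rewrite <- h1, hI; field; exact heps. }
  assert (hE : vE c = eta + sigma * x).
  { rewrite <- h2, hI; field; exact heps. }
  assert (hx : x = (1 - vS c - q - eta) / (1 - eps + sigma + eps * kappa)).
  { unfold vsum in hc; rewrite hE, hI, hQ in hc.
    apply (Rmult_eq_reg_r (1 - eps + sigma + eps * kappa)); [| exact hD].
    field_simplify; [lra | exact hD]. }
  rewrite hS in hx.
  apply vec4_ext; simpl; [exact hS | rewrite hE, hx | rewrite hI, hx | rewrite hQ, hx];
    field; auto.
Qed.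

End Equilibria.

Theorem theorem12 (r sigma kappa tau p : R)
  (hr : 0 < r) (hsigma : 0 <= sigma) (hkappa : 0 < kappa) (htau : 0 < tau)
  (hp : 0 <= p <= 1) (heps : p * exp (- tau) < 1) (eta q : R) :
  let eps := p * exp (- tau) in
  (* (1) F ∩ E0 = { hat u(eta,q) } *)
  (inCstar sigma tau kappa (hat (u_eq eta q)) /\
   forall phi,
     (inF r sigma tau kappa eta q phi /\ inE0 sigma tau kappa phi) <->
     (inCstar sigma tau kappa phi /\
      eqC sigma tau kappa phi (hat (u_eq eta q)))) /\
  (* (2) F ∩ EI = { hat v(eta,q) } *)
  (inCstar sigma tau kappa (hat (v_eq r eps sigma kappa eta q)) /\
   forall phi,
     (inF r sigma tau kappa eta q phi /\ inEI r eps sigma tau kappa phi) <->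
     (inCstar sigma tau kappa phi /\
      eqC sigma tau kappa phi (hat (v_eq r eps sigma kappa eta q)))).
Proof.
  intros eps.
  assert (heps0 : 0 <= eps) by (apply Rmult_le_pos; [lra | left; apply exp_pos]).
  assert (heps1 : eps < 1) by exact heps.
  clearbody eps.
  assert (hD : 0 < 1 - eps + sigma + eps * kappa).
  { assert (0 <= eps * kappa) by (apply Rmult_le_pos; lra); lra. }
  assert (hlevel := level_set_meet_constants r sigma tau kappa eta q
                       hsigma (Rlt_le _ _ htau) (Rlt_le _ _ hkappa)).
  destruct (u_eq_equilibrium r sigma kappa eta q) as [hu [hu1 hu2]].
  destruct (v_eq_equilibrium r sigma kappa eps eta q) as [hv [hv1 hv2]]; try lra.
  split; apply hlevel; try assumption.
  - reflexivity.
  - apply const_I0_unique.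
  - reflexivity.
  - intros c; apply const_S_unique; lra.
Qed.
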